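(* If $q$ is a power of an odd prime, then the graph $G_q$ is isomorphic to an induced subgraph of $ER_q$.
   Context: For a power $q$ of an odd prime, let $A=\{(a,a^2):a\in\mathbb{F}_q\}\subset\mathbb{F}_q^2$. The graph $G_q$ has vertex set $\mathbb{F}_q\times\mathbb{F}_q$, and distinct vertices $(x_1,x_2)$ and $(y_1,y_2)$ are adjacent if and only if $(x_1,x_2)+(y_1,y_2)\in A$ (equivalently $(x_1+y_1)^2=x_2+y_2$); $G_q$ has no loops. $ER_q$ is the graph whose vertices are the points of $PG(2,q)$, i.e. the $1$-dimensional subspaces of $\mathbb{F}_q^3$, where distinct vertices $(x_0,x_1,x_2)$ and $(y_0,y_1,y_2)$ (homogeneous coordinates) are adjacent if and only if $x_0y_0+x_1y_1+x_2y_2=0$. *)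

From HB Require Import structures.
From mathcomp Require Import all_boot all_order all_algebra all_fingroup all_field.
Set Implicit Arguments. Unset Strict Implicit. Unset Printing Implicit Defensive.
Import GRing.Theory.
Local Open Scope ring_scope.

Definition Gq_adj (F : finFieldType) (x y : F * F) : bool :=
  (x != y) && ((x.1 + y.1) ^+ 2 == x.2 + y.2).

Definition dot3 (F : fieldType) (u v : 'rV[F]_3) : F :=
  \sum_(i < 3) u 0 i * v 0 i.

(* Points of PG(2,q): 1-dimensional subspaces of F^3. *)
Definition is_point (F : fieldType) (U : {vspace 'rV[F]_3}) : Prop :=
  \dim U = 1%N.

(* ER_q adjacency between points U, V: distinct, and orthogonal
   (every vector of U is orthogonal to every vector of V; for 1-dim
   subspaces this is orthogonality of homogeneous coordinates). *)
Definition ER_adj (F : fieldType) (U V : {vspace 'rV[F]_3}) : Prop :=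
  U <> V /\ forall u v, u \in U -> v \in V -> dot3 u v = 0.

From HB Require Import structures.
From mathcomp Require Import all_boot all_order all_algebra all_fingroup all_field.
From mathcomp Require Import ring.
Set Implicit Arguments. Unset Strict Implicit. Unset Printing Implicit Defensive.
Import GRing.Theory.
Local Open Scope ring_scope.

(* In a finite field, squares fill more than half of F, so -1 = a^2 + b^2 for
   some a, b.  Then P = (1, a, b) and Q = (1, -a, -b) are isotropic with
   P.Q = 2, and R = (0, b, -a) is orthogonal to both with R.R = -1.  Writing
   A(x) = x1^2 - x2, the vectors u(x) = P - A(x) Q + 2 x1 R satisfy
   u(x).u(y) = -2 ((x1 + y1)^2 - x2 - y2), so x |-> <u(x)> maps adjacency of
   G_q exactly onto orthogonality; it is injective because u(x).Q = 2 fixes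
   the scaling of u(x), and u(x).R and u(x).P recover x1 and A(x). *)

Section SumOfTwoSquares.
Variable F : finFieldType.

Let squares := [set x ^+ 2 | x in predT] : {set F}.

Lemma card_sqr_fiber_le2 (j : F) : (#|[set i : F | i ^+ 2 == j]| <= 2)%N.
Proof.
have [-> | [x]] := set_0Vmem [set i : F | i ^+ 2 == j]; first by rewrite cards0.
rewrite inE => /eqP xj.
have sub_pm : [set i : F | i ^+ 2 == j] \subset [set x; - x].
  by apply/subsetP => y; rewrite inE => /eqP yj; rewrite !inE -eqf_sqr yj xj.
by rewrite (leq_trans (subset_leq_card sub_pm)) // cards2; case: (_ != _).
Qed.

Lemma card_lt_twice_squares : (#|F| < 2 * #|squares|)%N.
Proof.
have sq0 : (0 : F) \in squares by apply/imsetP; exists 0; rewrite ?expr0n.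
have fiber0 : #|[set i : F | i ^+ 2 == 0]| = 1%N.
  by rewrite (@eq_card1 _ 0) // => y; rewrite inE sqrf_eq0.
have -> : #|F| = (\sum_(j in squares) \sum_(i in predT | i ^+ 2 == j) 1)%N.
  by rewrite -(partition_big_imset (fun x : F => x ^+ 2)) sum1_card.
rewrite (bigD1 0) //= sum1dep_card fiber0 [#|squares|](cardsD1 0) sq0.
rewrite (eq_bigl (mem (squares :\ 0))) => [|j]; last by rewrite !inE andbC.
rewrite mulnS add1n !ltnS mulnC -sum_nat_const leq_sum // => j _.
by rewrite sum1dep_card card_sqr_fiber_le2.
Qed.

Lemma sum_of_two_squares (c : F) : exists a b : F, a ^+ 2 + b ^+ 2 = c.
Proof.
pose complements := [set c - y | y in squares].
have card_compl : #|complements| = #|squares|.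
  by apply: card_imset => y z /addrI /oppr_inj.
have [disj | [z]] := set_0Vmem (squares :&: complements).
  have := max_card (mem (squares :|: complements)).
  rewrite cardsU disj cards0 subn0 card_compl addnn -mul2n => le_sq.
  by have := leq_ltn_trans le_sq card_lt_twice_squares; rewrite ltnn.
rewrite inE => /andP[/imsetP[a _ ->] /imsetP[_ /imsetP[b _ ->] eq_ab]].
by exists a, b; rewrite eq_ab subrK.
Qed.

End SumOfTwoSquares.

Section Dot3.
Variable F : fieldType.
Implicit Types (u v w : 'rV[F]_3) (k : F).

Definition vec3 (c0 c1 c2 : F) : 'rV[F]_3 := \row_(i < 3) [:: c0; c1; c2]`_i.

Lemma dot3E c0 c1 c2 d0 d1 d2 :
  dot3 (vec3 c0 c1 c2) (vec3 d0 d1 d2) = c0 * d0 + c1 * d1 + c2 * d2.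
Proof. by rewrite /dot3 !big_ord_recr big_ord0 /= !mxE /= add0r. Qed.

Lemma dot3C u v : dot3 u v = dot3 v u.
Proof. by apply: eq_bigr => i _; rewrite mulrC. Qed.

Lemma dot3Dl u v w : dot3 (u + v) w = dot3 u w + dot3 v w.
Proof.
by rewrite /dot3 -big_split; apply: eq_bigr => i _; rewrite mxE mulrDl.
Qed.

Lemma dot3Zl k u v : dot3 (k *: u) v = k * dot3 u v.
Proof.
by rewrite /dot3 big_distrr /=; apply: eq_bigr => i _; rewrite mxE mulrA.
Qed.

Lemma dot3Dr u v w : dot3 u (v + w) = dot3 u v + dot3 u w.
Proof. by rewrite dot3C dot3Dl !(dot3C u). Qed.

Lemma dot3Zr k u v : dot3 u (k *: v) = k * dot3 u v.
Proof. by rewrite dot3C dot3Zl dot3C. Qed.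

Lemma dot30l v : dot3 0 v = 0.
Proof. by rewrite -(scale0r 0) dot3Zl mul0r. Qed.

Lemma line_orthoP u v :
  (forall u' v', u' \in <[u]>%VS -> v' \in <[v]>%VS -> dot3 u' v' = 0) <->
  dot3 u v = 0.
Proof.
split=> [orth | uv0 _ _ /vlineP[k ->] /vlineP[l ->]].
  exact: orth (memv_line u) (memv_line v).
by rewrite dot3Zl dot3Zr uv0 !mulr0.
Qed.

End Dot3.

Section Embedding.
Variable F : fieldType.
Hypothesis two_neq0 : (2 : F) != 0.
Variables a b : F.
Hypothesis sum_sq_ab : a ^+ 2 + b ^+ 2 = -1.

Definition isoP := vec3 1 a b.
Definition isoQ := vec3 1 (- a) (- b).
Definition orthR := vec3 0 b (- a).

Lemma eq_mod_norm (x y k : F) : x - y = (a ^+ 2 + b ^+ 2 + 1) * k -> x = y.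
Proof. by rewrite sum_sq_ab addNr mul0r => /eqP; rewrite subr_eq0 => /eqP. Qed.

Lemma dot_isoPP : dot3 isoP isoP = 0.
Proof. by apply: (@eq_mod_norm _ _ 1); rewrite dot3E; ring. Qed.

Lemma dot_isoQQ : dot3 isoQ isoQ = 0.
Proof. by apply: (@eq_mod_norm _ _ 1); rewrite dot3E; ring. Qed.

Lemma dot_isoPQ : dot3 isoP isoQ = 2.
Proof. by apply: (@eq_mod_norm _ _ (-1)); rewrite dot3E; ring. Qed.

Lemma dot_orthRR : dot3 orthR orthR = -1.
Proof. by apply: (@eq_mod_norm _ _ 1); rewrite dot3E; ring. Qed.

Lemma dot_isoPR : dot3 isoP orthR = 0.
Proof. by rewrite dot3E; ring. Qed.

Lemma dot_isoQR : dot3 isoQ orthR = 0.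
Proof. by rewrite dot3E; ring. Qed.

Definition gq_vec (x : F * F) : 'rV[F]_3 :=
  isoP + (x.2 - x.1 ^+ 2) *: isoQ + (2 * x.1) *: orthR.

Lemma dot_gq_vec x y :
  dot3 (gq_vec x) (gq_vec y) = 2 * (x.2 + y.2 - (x.1 + y.1) ^+ 2).
Proof.
rewrite !(dot3Dl, dot3Dr, dot3Zl, dot3Zr).
rewrite (dot3C isoQ isoP) (dot3C orthR isoP) (dot3C orthR isoQ).
rewrite dot_isoPP dot_isoQQ dot_isoPQ dot_orthRR dot_isoPR dot_isoQR; ring.
Qed.

Lemma dot_gq_vec_isoQ x : dot3 (gq_vec x) isoQ = 2.
Proof.
rewrite !(dot3Dl, dot3Zl) (dot3C orthR isoQ) dot_isoPQ dot_isoQQ dot_isoQR.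
ring.
Qed.

Lemma dot_gq_vec_isoP x : dot3 (gq_vec x) isoP = 2 * (x.2 - x.1 ^+ 2).
Proof.
rewrite !(dot3Dl, dot3Zl) (dot3C isoQ isoP) (dot3C orthR isoP).
rewrite dot_isoPP dot_isoPQ dot_isoPR; ring.
Qed.

Lemma dot_gq_vec_orthR x : dot3 (gq_vec x) orthR = - (2 * x.1).
Proof. rewrite !(dot3Dl, dot3Zl) dot_isoPR dot_isoQR dot_orthRR; ring. Qed.

Lemma gq_vec_neq0 x : gq_vec x != 0.
Proof.
by apply: contra_neq two_neq0 => u0; rewrite -(dot_gq_vec_isoQ x) u0 dot30l.
Qed.

Lemma gq_vec_inj : injective gq_vec.
Proof.
move=> x y eq_xy.
have eq1 : x.1 = y.1.
  by apply/(mulfI two_neq0)/oppr_inj; rewrite -!dot_gq_vec_orthR eq_xy.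
have eq2 : x.2 = y.2.
  apply/(subIr (x.1 ^+ 2))/(mulfI two_neq0).
  by rewrite {2}eq1 -!dot_gq_vec_isoP eq_xy.
by case: x y eq1 eq2 {eq_xy} => [x1 x2] [y1 y2] /= -> ->.
Qed.

Lemma gq_line_inj : injective (fun x => <[gq_vec x]>%VS).
Proof.
move=> x y /= eq_xy; apply: gq_vec_inj.
have /vlineP[k eq_k] : gq_vec x \in <[gq_vec y]>%VS by rewrite -eq_xy memv_line.
have k1 : k = 1.
  apply: (mulIf two_neq0); rewrite mul1r.
  by rewrite -{2}(dot_gq_vec_isoQ x) eq_k dot3Zl dot_gq_vec_isoQ.
by rewrite eq_k k1 scale1r.
Qed.

Lemma dot_gq_vec_eq0 x y :
  (dot3 (gq_vec x) (gq_vec y) == 0) = ((x.1 + y.1) ^+ 2 == x.2 + y.2).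
Proof. by rewrite dot_gq_vec mulf_eq0 (negbTE two_neq0) subr_eq0 eq_sym. Qed.

End Embedding.

Lemma two_neq0_pchar_odd (F : nzRingType) (p : nat) :
  p \in [pchar F] -> odd p -> (2 : F) != 0.
Proof.
move=> charFp odd_p.
rewrite -(dvdn_pcharf charFp) dvdn_prime2 ?(pcharf_prime charFp) //.
by apply: contraL odd_p => /eqP ->.
Qed.

Theorem theorem1p4 (p : nat) (F : finFieldType) :
  prime p -> odd p -> p \in [pchar F] ->
  exists f : F * F -> {vspace 'rV[F]_3},
    (forall x, is_point (f x)) /\
    injective f /\
    (forall x y, Gq_adj x y <-> ER_adj (f x) (f y)).
Proof.
move=> _ odd_p charFp.
have two_neq0 := two_neq0_pchar_odd charFp odd_p.
have [a [b sum_sq_ab]] := sum_of_two_squares (-1 : F).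
exists (fun x => <[gq_vec a b x]>%VS).
have line_inj := gq_line_inj two_neq0 sum_sq_ab.
have dot_eq0 := dot_gq_vec_eq0 two_neq0 sum_sq_ab.
split=> [x | ]; first by rewrite /is_point dim_vline (gq_vec_neq0 two_neq0).
split=> // x y; rewrite /Gq_adj /ER_adj line_orthoP -dot_eq0.
split=> [/andP[/eqP neq_xy /eqP ->] | [neq_lines /eqP ->]].
  by split=> // /line_inj.
by rewrite andbT; apply: contra_not_neq neq_lines => ->.
Qed.
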